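(* Let $(X,p)$ be a metric space, $(Y,d)$ a complete separable metric space, and $F: X \Rightarrow Y$ a multi-valued function. Let $\overline{F}: X \Rightarrow Y$ be given by $\overline{F}(x) = $ the closure of $F(x)$, viewed also as a map $X \to \mathcal{F}(Y)$. Then: (1) $F$ is strongly continuous at $x\in X$ if and only if $\overline F$ is strongly continuous at $x$, if and only if $\overline F: X \to \mathcal{F}(Y)$ is continuous at $x$ with respect to the lower Fell topology on $\mathcal{F}(Y)$. In particular, if $\overline F: X \to \mathcal{F}(Y)$ is continuous at $x$ with respect to the Fell topology, then $F$ is strongly continuous at $x$. (2) Let $\mathcal{T}$ be a Polish topology on $\mathcal{F}(Y)$ whose Borel sets are exactly the sets of the Effros Borel $\sigma$-algebra. If $F$ is strongly continuous at every $x \in X$, then $\overline F: X \to (\mathcal{F}(Y),\mathcal{T})$ is Borel measurable (with $X$ carrying its Borel $\sigma$-algebra). (3) If the graph of $F$ is a closed subset of $X \times Y$ and $F$ is strongly continuous at $x \in X$, then $F: X \to \mathcal{F}(Y)$ is continuous at $x$ with respect to the Fell topology. (4) If the graph of $F$ is a closed subset of $X\times Y$, then $F$ is strongly continuous at $x \in X$ if and only if $F: X\to\mathcal{F}(Y)$ is continuous at $x$ with respect to the Fell topology.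
   Context: A multi-valued function $F: X \Rightarrow Y$ assigns to each $x$ a nonempty set $F(x)\subseteq Y$; its graph is $\{(x,y): y\in F(x)\}$. $F$ is strongly continuous at $x$ if for every $y \in F(x)$ and every $\varepsilon>0$ there is $\delta>0$ such that for every $x' \in B_p(x,\delta)$ there is $y' \in F(x')$ with $d(y,y')<\varepsilon$. $\mathcal{F}(Y)$ is the family of closed subsets of $Y$. The lower Fell topology on $\mathcal{F}(Y)$ is generated by the sets $\mathcal{A}_U = \{C \in \mathcal{F}(Y): C\cap U \neq\emptyset\}$ for $U\subseteq Y$ open; the Effros Borel $\sigma$-algebra is the $\sigma$-algebra generated by these sets $\mathcal{A}_U$. The Fell topology has as basis the sets $\{C\in\mathcal{F}(Y): C\cap K=\emptyset \text{ and } C\cap U_i\neq\emptyset \text{ for all } i\le n\}$ with $K\subseteq Y$ compact and $U_1,\dots,U_n\subseteq Y$ open. *)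

From HB Require Import structures.
From mathcomp Require Import all_boot all_order all_algebra.
From mathcomp Require Import all_classical all_reals.
From mathcomp Require Import topology normedtype measure.
Set Implicit Arguments. Unset Strict Implicit. Unset Printing Implicit Defensive.
Import Order.TTheory GRing.Theory Num.Theory.
Local Open Scope classical_set_scope.
Local Open Scope ring_scope.

Definition separable_space (T : topologicalType) : Prop :=
  exists D : set T, countable D /\ dense D.

Definition strongly_continuous_at {R : realType} {X Y : pseudoMetricType R}
  (F : X -> set Y) (x : X) : Prop :=
  forall y, F x y -> forall eps : R, 0 < eps ->
    exists2 delta : R, 0 < delta &
      forall x', ball x delta x' -> exists2 y', F x' y' & ball y eps y'.

Definition closedsets (Y : topologicalType) := {C : set Y | closed C}.

Definition Fbar {X Y : topologicalType} (F : X -> set Y) (x : X)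
  : closedsets Y := exist _ (closure (F x)) (@closed_closure Y (F x)).

Definition is_topology (T : Type) (tau : set (set T)) : Prop :=
  [/\ tau setT, tau set0,
      (forall A B, tau A -> tau B -> tau (A `&` B)) &
      (forall (I : Type) (f : I -> set T), (forall i, tau (f i)) ->
         tau (\bigcup_(i in [set: I]) f i))].

Definition generated_topology (T : Type) (S : set (set T)) : set (set T) :=
  fun O => forall tau, is_topology tau -> S `<=` tau -> tau O.

Definition hit (Y : topologicalType) (U : set Y) : set (closedsets Y) :=
  [set C | proj1_sig C `&` U !=set0].

Definition lower_fell (Y : topologicalType) : set (set (closedsets Y)) :=
  generated_topology [set hit U | U in [set U : set Y | open U]].

Definition fell_basis (Y : topologicalType) : set (set (closedsets Y)) :=
  [set B | exists (K : set Y) (n : nat) (U : nat -> set Y),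
      [/\ compact K, (forall i, (i < n)%N -> open (U i)) &
          B = [set C | proj1_sig C `&` K = set0 /\
                       forall i, (i < n)%N -> proj1_sig C `&` U i !=set0]]].

Definition fell (Y : topologicalType) : set (set (closedsets Y)) :=
  generated_topology (@fell_basis Y).

Definition effros (Y : topologicalType) : set (set (closedsets Y)) :=
  <<s [set hit U | U in [set U : set Y | open U]] >>.

Definition continuous_at_wrt {X : topologicalType} {T : Type}
  (tau : set (set T)) (G : X -> T) (x : X) : Prop :=
  forall O, tau O -> O (G x) -> nbhs x (G @^-1` O).

Definition is_metric {R : realType} (T : Type) (d : T -> T -> R) : Prop :=
  [/\ forall a b, 0 <= d a b,
      forall a b, d a b = 0 <-> a = b,
      forall a b, d a b = d b a &
      forall a b c, d a c <= d a b + d b c].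

Definition metric_open {R : realType} (T : Type) (d : T -> T -> R) : set (set T) :=
  [set O | forall a, O a -> exists2 e : R, 0 < e & forall b, d a b < e -> O b].

Definition metric_complete {R : realType} (T : Type) (d : T -> T -> R) : Prop :=
  forall u : nat -> T,
    (forall e : R, 0 < e -> exists N, forall m n, (N <= m)%N -> (N <= n)%N ->
        d (u m) (u n) < e) ->
    exists l, forall e : R, 0 < e -> exists N, forall n, (N <= n)%N -> d (u n) l < e.

Definition metric_separable {R : realType} (T : Type) (d : T -> T -> R) : Prop :=
  exists D : set T, countable D /\
    forall a (e : R), 0 < e -> exists2 b, D b & d a b < e.

Definition polish_topology (R : realType) (T : Type) (tau : set (set T)) : Prop :=
  exists d : T -> T -> R, [/\ is_metric d, metric_complete d,
    metric_separable d & tau = metric_open d].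

Definition borel_measurable_into {X : topologicalType} {T : Type}
  (S : set (set T)) (G : X -> T) : Prop :=
  forall B, S B -> <<s [set O : set X | open O] >> (G @^-1` B).

Definition graph {X Y : Type} (F : X -> set Y) : set (X * Y) :=
  [set z | F z.1 z.2].

From HB Require Import structures.
From mathcomp Require Import all_boot all_order all_algebra.
From mathcomp Require Import all_classical all_reals.
From mathcomp Require Import topology normedtype measure.
Set Implicit Arguments.
Unset Strict Implicit.
Unset Printing Implicit Defensive.
Import Order.TTheory GRing.Theory Num.Theory.
Local Open Scope classical_set_scope.
Local Open Scope ring_scope.

(* Strong continuity of F at x says exactly that, for every open U meeting
   F(x), the closures of F(x') keep meeting U for x' near x: this is
   continuity of the closure map for the lower Fell topology, and it makes the
   preimages of the Effros generators open, hence the closure map Borel.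
   Continuity for the full Fell topology additionally asks that the closures of
   F(x') stay off a compact K that misses F(x); when the graph of F is closed,
   each point of K has a product neighbourhood missing the graph, and
   compactness of K makes these finitely many conditions uniform in x'. *)

Lemma generated_topology_base (T : Type) (S : set (set T)) :
  S `<=` generated_topology S.
Proof. by move=> O SO tau _; apply. Qed.

Lemma generated_topologyS (T : Type) (S S' : set (set T)) :
  S `<=` S' -> generated_topology S `<=` generated_topology S'.
Proof. by move=> SS' O SO tau tau_top S'tau; apply: SO => // A /SS' /S'tau. Qed.

Lemma continuous_at_wrt_generated {X : topologicalType} {T : Type}
    (S : set (set T)) (G : X -> T) (x : X) :
  (forall O, S O -> O (G x) -> nbhs x (G @^-1` O)) ->
  continuous_at_wrt (generated_topology S) G x.
Proof.
(* the sets O satisfying the conclusion form a topology containing S *)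
move=> GS O SO; apply: (SO [set O | O (G x) -> nbhs x (G @^-1` O)]) => //.
split=> //.
- by move=> _; exact: filterT.
- by move=> A B GA GB [/GA nA /GB nB]; exact: filterI.
- move=> I f Gf [i _ fi]; apply: filterS (Gf i fi) => z fz; by exists i.
Qed.

Lemma lower_fell_hit (Y : topologicalType) (U : set Y) :
  open U -> lower_fell (hit U).
Proof. by move=> oU; apply: generated_topology_base; exists U. Qed.

Lemma fell_basis_hit (Y : topologicalType) (U : set Y) :
  open U -> fell_basis (hit U).
Proof.
move=> oU; exists set0, 1%N, (fun=> U); split => //; first exact: compact0.
apply/seteqP; split => C /=.
  by move=> CU; split; [rewrite setI0|move=> i _; exact: CU].
by move=> [_ CU]; exact: (CU 0%N).
Qed.

Lemma lower_fell_sub_fell (Y : topologicalType) : @lower_fell Y `<=` @fell Y.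
Proof. by apply: generated_topologyS => _ [U oU <-]; exact: fell_basis_hit. Qed.

Lemma closed_graph_near_closure_disjoint (X Y : topologicalType)
    (F : X -> set Y) (K : set Y) (x : X) :
  closed (graph F) -> compact K -> closure (F x) `&` K = set0 ->
  \forall x' \near x, closure (F x') `&` K = set0.
Proof.
move=> cG cK FxK.
suff : \forall x' \near x, K `<=` ~` closure (F x').
  by apply: filterS => x' /disjoints_subset; rewrite setIC.
apply: ((compact_near_coveringP K).1 cK X (nbhs x)
  (fun x' y => ~ closure (F x') y) _) => y Ky.
have notFxy : ~ F x y.
  move=> Fxy; suff : (closure (F x) `&` K) y by rewrite FxK.
  by split => //; exact: subset_closure.
have [[V W] /= [xV yW] VWG] : nbhs (x, y) (~` graph F) by apply: (closed_openC cG).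
exists (W°, V) => /=; first by split => //; exact: nbhs_interior.
move=> [y' x'] [/= Wy' Vx'] Fx'y'.
have [z [Fx'z Wz]] := Fx'y' W Wy'.
exact: (VWG (x', z)).
Qed.

Lemma preimage_smallest_sigma (aT rT : Type) (A : set (set aT))
    (S : set (set rT)) (f : aT -> rT) :
  sigma_algebra setT A -> (forall B, S B -> A (f @^-1` B)) ->
  forall B, <<s S >> B -> A (f @^-1` B).
Proof.
move=> sA fS B SB; rewrite -[f @^-1` B]setTI.
apply: (smallest_sub (sigma_algebra_image f sA)) SB => C /fS.
by rewrite /image_set_system /= setTI.
Qed.

Section strong_continuity.
Context {R : realType} {X Y : pseudoMetricType R}.
Implicit Types (F G : X -> set Y) (x : X).

Lemma strongly_continuous_closureE F x :
  strongly_continuous_at (fun x' => closure (F x')) x <->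
  strongly_continuous_at F x.
Proof.
split=> Fsc y Fxy e e0; have e20 : 0 < e / 2 by rewrite divr_gt0.
- have [d d0 Fd] := Fsc y (subset_closure Fxy) _ e20.
  exists d => // x' xx'; have [y' Fx'y' yy'] := Fd x' xx'.
  have [z [Fx'z y'z]] := Fx'y' _ (nbhsx_ballx y' _ e20).
  by exists z => //; exact: ball_split yy' y'z.
- have [z [Fxz yz]] := Fxy _ (nbhsx_ballx y _ e20).
  have [d d0 Fd] := Fsc z Fxz _ e20.
  exists d => // x' xx'; have [y' Fx'y' zy'] := Fd x' xx'.
  exists y'; first exact: subset_closure.
  exact: ball_split yz zy'.
Qed.

Lemma strongly_continuous_near_meets G x (U : set Y) :
  strongly_continuous_at G x -> open U -> G x `&` U !=set0 ->
  \forall x' \near x, G x' `&` U !=set0.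
Proof.
move=> Gsc oU [y [Gxy Uy]].
have /nbhs_ballP [e e0 yeU] : nbhs y U by exact: open_nbhs_nbhs.
have [d d0 Gd] := Gsc y Gxy e e0.
apply/nbhs_ballP; exists d => // x' xx'.
have [y' Gx'y' yy'] := Gd x' xx'.
by exists y'; split => //; exact: yeU.
Qed.

Lemma strongly_continuous_lower_fellE F x :
  strongly_continuous_at (fun x' => closure (F x')) x <->
  continuous_at_wrt (@lower_fell Y) (Fbar F) x.
Proof.
split=> [Fsc|Fcont].
  apply: continuous_at_wrt_generated => _ [U oU <-].
  exact: strongly_continuous_near_meets.
move=> y Fxy e e0.
(* balls need not be open in a pseudometric space, hence the interior *)
have Fxe : hit (ball y e)° (Fbar F x).
  by exists y; split => //; exact: nbhsx_ballx.
have /nbhs_ballP [d d0 Fd] := Fcont _ (lower_fell_hit (open_interior _)) Fxe.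
exists d => // x' xx'; have [y' [Fx'y' ey']] := Fd x' xx'.
by exists y' => //; exact: interior_subset.
Qed.

Lemma fell_continuous_strongly_continuous F x :
  continuous_at_wrt (@fell Y) (Fbar F) x -> strongly_continuous_at F x.
Proof.
move=> Fcont; apply/strongly_continuous_closureE/strongly_continuous_lower_fellE.
by move=> O /lower_fell_sub_fell; exact: Fcont.
Qed.

Lemma strongly_continuous_fell_continuous F x :
  closed (graph F) -> strongly_continuous_at F x ->
  continuous_at_wrt (@fell Y) (Fbar F) x.
Proof.
move=> cG /strongly_continuous_closureE Fsc.
apply: continuous_at_wrt_generated => _ [K [n [U [cK oU ->]]]] [/= FxK FxU].
have missK := closed_graph_near_closure_disjoint cG cK FxK.
have hitU : \forall x' \near x, forall i : 'I_n, closure (F x') `&` U i !=set0.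
  apply: filter_forall => i.
  exact: strongly_continuous_near_meets Fsc (oU i (ltn_ord i)) (FxU i (ltn_ord i)).
apply: filterS (filterI missK hitU) => x' [Fx'K Fx'U]; split => // i lt_in.
exact: Fx'U (Ordinal lt_in).
Qed.

Lemma strongly_continuous_effros_measurable F :
  (forall x, strongly_continuous_at F x) ->
  borel_measurable_into (@effros Y) (Fbar F).
Proof.
move=> Fsc; apply: preimage_smallest_sigma; first exact: smallest_sigma_algebra.
move=> _ [U oU <-]; apply: sub_sigma_algebra; rewrite /= openE => x Fx.
exact/strongly_continuous_near_meets/Fx/oU/strongly_continuous_closureE.
Qed.

End strong_continuity.

Theorem proposition3p3 (R : realType) (X : pseudoMetricType R)
  (Y : completePseudoMetricType R)
  (hX : hausdorff_space X) (hY : hausdorff_space Y)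
  (sepY : separable_space Y)
  (F : X -> set Y) (hF : forall x, F x !=set0) :
  (* (1) *)
  (forall x : X,
     (strongly_continuous_at F x <->
        strongly_continuous_at (fun x' => closure (F x')) x) /\
     (strongly_continuous_at (fun x' => closure (F x')) x <->
        continuous_at_wrt (@lower_fell Y) (Fbar F) x) /\
     (continuous_at_wrt (@fell Y) (Fbar F) x -> strongly_continuous_at F x)) /\
  (* (2) *)
  (forall tau : set (set (closedsets Y)),
     polish_topology R tau -> <<s tau >> = @effros Y ->
     (forall x, strongly_continuous_at F x) ->
     borel_measurable_into (<<s tau >>) (Fbar F)) /\
  (* (3) *)
  (closed (graph F) -> forall x : X,
     strongly_continuous_at F x -> continuous_at_wrt (@fell Y) (Fbar F) x) /\
  (* (4) *)
  (closed (graph F) -> forall x : X,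
     strongly_continuous_at F x <-> continuous_at_wrt (@fell Y) (Fbar F) x).
Proof.
split.
  move=> x; split; first by split=> /strongly_continuous_closureE.
  split; first exact: strongly_continuous_lower_fellE.
  exact: fell_continuous_strongly_continuous.
split; first by move=> tau _ -> Fsc; exact: strongly_continuous_effros_measurable.
split; first by move=> cG x; exact: strongly_continuous_fell_continuous.
move=> cG x; split; first exact: strongly_continuous_fell_continuous.
exact: fell_continuous_strongly_continuous.
Qed.
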